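(* Let $d\le r$, $G\in\mathbb{R}^{r\times d}$, $Y\in\mathbb{R}^{r\times d}$ with $Y^\top Y=I_d$, and $A = \tfrac12(G^\top Y + Y^\top G)$. Then $$\mathrm{tr}(A)^2 - \|A\|_F^2 \le \|G\|_*^2 - \|G\|_F^2,$$ where $\|\cdot\|_*$ is the nuclear norm and $\|\cdot\|_F$ the Frobenius norm. *)

From HB Require Import structures.
From mathcomp Require Import all_boot all_order all_algebra.
Set Implicit Arguments. Unset Strict Implicit. Unset Printing Implicit Defensive.
Import Order.TTheory GRing.Theory Num.Theory.
Local Open Scope ring_scope.

Definition frob2 (R : rcfType) (m n : nat) (M : 'M[R]_(m, n)) : R :=
  \sum_(i < m) \sum_(j < n) M i j ^+ 2.

(* [sv_of G s]: s is the vector of singular values of G (d <= r), i.e.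
   G admits a (thin) singular value decomposition G = U diag(s) V^T with
   U^T U = I_d, V^T V = I_d and s >= 0 entrywise. *)
Definition sv_of (R : rcfType) (r d : nat) (G : 'M[R]_(r, d)) (s : 'rV[R]_d) : Prop :=
  (forall i, 0 <= s 0 i) /\
  exists (U : 'M[R]_(r, d)) (V : 'M[R]_d),
    U^T *m U = 1%:M /\ V^T *m V = 1%:M /\ G = U *m diag_mx s *m V^T.

Definition nuc_of (R : rcfType) (d : nat) (s : 'rV[R]_d) : R := \sum_(i < d) s 0 i.

From HB Require Import structures.
From mathcomp Require Import all_boot all_order all_algebra.
From mathcomp Require Import ring.
Set Implicit Arguments. Unset Strict Implicit. Unset Printing Implicit Defensive.
Import Order.TTheory GRing.Theory Num.Theory.
Local Open Scope ring_scope.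

(* Write G = U diag(s) V^T. Conjugating by the orthogonal V turns A into
   B = V^T A V, the symmetric part of diag(s) C with C = U^T (Y V); trace and
   Frobenius norm do not change, and |C_ii| <= 1 because U and Y V are
   isometries (Bessel). Dropping the off-diagonal part of |B|_F^2 gives
   (tr B)^2 - |B|_F^2 <= sum_{i<>j} B_ii B_jj, and since |B_ii| = s_i |C_ii| <= s_i
   this is at most sum_{i<>j} s_i s_j = |G|_*^2 - |G|_F^2.
   The hypothesis d <= r is only needed for the SVD to exist, which [sv_of]
   already provides. *)

Section Frobenius.
Variable R : rcfType.

Lemma frob2E m n (M : 'M[R]_(m, n)) : frob2 M = \tr (M *m M^T).
Proof.
rewrite /frob2 /mxtrace; apply: eq_bigr => i _; rewrite mxE.
by apply: eq_bigr => j _; rewrite mxE expr2.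
Qed.

Lemma mulTmx_diag m n (M : 'M[R]_(m, n)) j : (M^T *m M) j j = \sum_i M i j ^+ 2.
Proof. by rewrite mxE; apply: eq_bigr => i _; rewrite mxE expr2. Qed.

Lemma sum_diag_sqr_le_frob2 n (A : 'M[R]_n) : \sum_i A i i ^+ 2 <= frob2 A.
Proof.
rewrite /frob2; apply: ler_sum => i _.
rewrite (bigD1 i) //= lerDl; apply: sumr_ge0 => j _; exact: sqr_ge0.
Qed.

Lemma mxtrace_conj_isometry p n (V : 'M[R]_(p, n)) (X : 'M[R]_n) :
  V^T *m V = 1%:M -> \tr (V *m X *m V^T) = \tr X.
Proof. by move=> hV; rewrite mxtrace_mulC mulmxA hV mul1mx. Qed.

Lemma frob2_mul_isometry m n p k (U : 'M[R]_(m, n)) (X : 'M[R]_(n, k))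
    (V : 'M[R]_(p, k)) :
  U^T *m U = 1%:M -> V^T *m V = 1%:M -> frob2 (U *m X *m V^T) = frob2 X.
Proof.
move=> hU hV; rewrite !frob2E mxtrace_mulC !trmx_mul trmxK.
rewrite !mulmxA -[_ *m U^T *m U]mulmxA hU mulmx1.
by rewrite -[V *m X^T *m X]mulmxA mxtrace_conj_isometry // mxtrace_mulC.
Qed.

Lemma frob2_diag_mx n (s : 'rV[R]_n) : frob2 (diag_mx s) = \sum_i s 0 i ^+ 2.
Proof.
apply: eq_bigr => i _; rewrite (bigD1 i) //= big1 ?addr0 ?mxE ?eqxx //.
by move=> j /negPf ji; rewrite mxE eq_sym ji mulr0n expr0n.
Qed.

(* Bessel's inequality, column by column: [1 - U U^T] is an orthogonal
   projection, so [Z^T Z] splits into two Gram matrices. *)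
Lemma col_norm_isometry_mul_le m n k (U : 'M[R]_(m, n)) (Z : 'M[R]_(m, k)) j :
  U^T *m U = 1%:M -> \sum_i (U^T *m Z) i j ^+ 2 <= \sum_i Z i j ^+ 2.
Proof.
move=> hU; set P := 1%:M - U *m U^T.
have PtP : P^T *m P = P.
  have -> : P^T = P by rewrite /P raddfB /= trmx1 trmx_mul trmxK.
  rewrite /P mulmxBl mul1mx mulmxBr mulmx1 mulmxA -[U *m U^T *m U]mulmxA hU.
  by rewrite mulmx1 subrr subr0.
have gram_split : Z^T *m Z = (U^T *m Z)^T *m (U^T *m Z) + (P *m Z)^T *m (P *m Z).
  rewrite !trmx_mul trmxK -[_ *m (P *m Z)]mulmxA [P^T *m _]mulmxA PtP.
  by rewrite /P mulmxBl mul1mx mulmxBr !mulmxA addrC subrK.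
have := congr1 (fun M : 'M[R]_k => M j j) gram_split.
rewrite /= [in X in _ = X]mxE !mulTmx_diag => ->; rewrite lerDl.
by apply: sumr_ge0 => i _; exact: sqr_ge0.
Qed.

Lemma norm_mulTmx_isometry_le1 m n k (U : 'M[R]_(m, n)) (Z : 'M[R]_(m, k)) i j :
  U^T *m U = 1%:M -> Z^T *m Z = 1%:M -> `|(U^T *m Z) i j| <= 1.
Proof.
move=> hU hZ; rewrite -(expr_le1 (_ : 0 < 2)%N) // real_normK ?num_real //.
have col_Z : \sum_l Z l j ^+ 2 = 1 by rewrite -mulTmx_diag hZ mxE eqxx.
have := col_norm_isometry_mul_le Z j hU; rewrite col_Z; apply: le_trans.
rewrite (bigD1 i) //= lerDl; apply: sumr_ge0 => l _; exact: sqr_ge0.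
Qed.

End Frobenius.

Section SumSquares.
Variable R : realDomainType.

Lemma sqr_sum_sub_sum_sqr n (a : 'I_n -> R) :
  (\sum_i a i) ^+ 2 - \sum_i a i ^+ 2 = \sum_i \sum_(j | j != i) a i * a j.
Proof.
rewrite expr2 big_distrlr /= -sumrB; apply: eq_bigr => i _.
by rewrite (bigD1 i) //= -expr2 addrAC subrr add0r.
Qed.

Lemma sqr_sum_sub_sum_sqr_le n (a s : 'I_n -> R) :
  (forall i, `|a i| <= s i) ->
  (\sum_i a i) ^+ 2 - \sum_i a i ^+ 2 <= (\sum_i s i) ^+ 2 - \sum_i s i ^+ 2.
Proof.
move=> las; rewrite !sqr_sum_sub_sum_sqr; apply: ler_sum => i _.
apply: ler_sum => j _; apply: le_trans (real_ler_norm _) _; first exact: num_real.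
by rewrite normrM ler_pM.
Qed.

End SumSquares.

Theorem lemmaB3 (R : rcfType) (r d : nat) (hdr : (d <= r)%N)
  (G Y : 'M[R]_(r, d)) (hY : Y^T *m Y = 1%:M) (s : 'rV[R]_d) (hs : sv_of G s) :
  let A : 'M[R]_d := 2^-1 *: (G^T *m Y + Y^T *m G) in
  (\tr A) ^+ 2 - frob2 A <= (nuc_of s) ^+ 2 - frob2 G.
Proof.
cbv zeta; set A := 2^-1 *: _; case: hs => s_ge0 [U [V [hU [hV defG]]]].
have hVVt : V *m V^T = 1%:M := mulmx1C hV.
pose C := U^T *m (Y *m V); pose B := V^T *m A *m V.
have C_diag i : `|C i i| <= 1.
  apply: norm_mulTmx_isometry_le1 => //.
  by rewrite trmx_mul !mulmxA -[V^T *m Y^T *m Y]mulmxA hY mulmx1.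
have conj_GtY : V^T *m (G^T *m Y) *m V = diag_mx s *m C.
  by rewrite defG !trmx_mul trmxK tr_diag_mx !mulmxA hV mul1mx.
clearbody C.
have defA : A = V *m B *m V^T.
  by rewrite /B !mulmxA hVVt mul1mx -mulmxA hVVt mulmx1.
have defB : B = 2^-1 *: (diag_mx s *m C + (diag_mx s *m C)^T).
  rewrite /B /A -scalemxAr -scalemxAl mulmxDr mulmxDl -conj_GtY.
  by rewrite !trmx_mul !trmxK !mulmxA.
have B_diag i : `|B i i| <= s 0 i.
  rewrite defB mul_diag_mx !mxE.
  have -> : 2^-1 * (s 0 i * C i i + s 0 i * C i i) = s 0 i * C i i by field.
  by rewrite normrM ger0_norm // ler_piMr.
rewrite defA mxtrace_conj_isometry // frob2_mul_isometry // defG.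
rewrite frob2_mul_isometry // frob2_diag_mx /nuc_of.
apply: le_trans (sqr_sum_sub_sum_sqr_le B_diag).
by rewrite lerB // sum_diag_sqr_le_frob2.
Qed.
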